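(* Let $S=\{s_1,\dots,s_N\}$ and $A$ be finite, $r:S\times A\to\mathbb{R}$, and $0<\gamma_p<\gamma<1$. Suppose that for every state-action pair $(s_n,a_k)$ we observe transition counts $c_{n,k,1},\dots,c_{n,k,N}\ge 0$ with total $C_{n,k}=\sum_{i=1}^N c_{n,k,i}>0$, and let $\hat T_{\mathrm{MLE}}(s_n,a_k,s_i)=c_{n,k,i}/C_{n,k}$. Fix a probability vector $q=(q_1,\dots,q_N)$ with all $q_i>0$, and for each $(s_n,a_k)$ place the Dirichlet prior $\mathrm{Dirichlet}(\alpha_{n,k,1},\dots,\alpha_{n,k,N})$ on $T(s_n,a_k,\cdot)$ with $$\alpha_{n,k,i}=\frac{\gamma-\gamma_p}{\gamma_p}\,C_{n,k}\,q_i .$$ Let $\hat T_{\mathrm{post}}(s_n,a_k,s_i)=\dfrac{c_{n,k,i}+\alpha_{n,k,i}}{C_{n,k}+\sum_{j}\alpha_{n,k,j}}$ be the posterior mean. Then: (i) for every $(s_n,a_k)$, $\hat T_{\mathrm{post}}(s_n,a_k,\cdot)=(1-\epsilon)\hat T_{\mathrm{MLE}}(s_n,a_k,\cdot)+\epsilon\, q$ with $\epsilon=\frac{\gamma-\gamma_p}{\gamma}$, the same for all $(s_n,a_k)$; and (ii) the MDP $(S,A,r,\hat T_{\mathrm{post}})$ planned with discount $\gamma$ and the MDP $(S,A,r,\hat T_{\mathrm{MLE}})$ planned with discount $\gamma_p$ have the same optimal policies (same $\arg\max_a Q^*(s,a)$ sets in every state). In particular, for a uniform prior ($q_i=1/N$)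 the implied prior parameters are $\alpha_{n,k,i}=\frac{\gamma-\gamma_p}{\gamma_p}\cdot\frac{C_{n,k}}{N}$, which grow with the number of observed transitions $C_{n,k}$.
   Context: Planning with discount factor $\gamma$ in an MDP with transition kernel $P$ means computing the optimal action-value function $Q^*$ solving $Q^*(s,a)=r(s,a)+\gamma\sum_{s'}P(s,a,s')\max_{a'}Q^*(s',a')$; optimal policies are those choosing actions in $\arg\max_a Q^*(s,a)$. *)

From HB Require Import structures.
From mathcomp Require Import all_boot all_order all_algebra.
From mathcomp Require Import reals.
Set Implicit Arguments. Unset Strict Implicit. Unset Printing Implicit Defensive.
Import Order.TTheory GRing.Theory Num.Theory.
Local Open Scope ring_scope.

Section MDP.
Context {R : realType} {N : nat} {A : finType}.

(* max over actions of Q s .; a0 only seeds the fold (A nonempty), the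
   value is the true maximum whatever a0 is. *)
Definition vmax (a0 : A) (Q : 'I_N -> A -> R) (s : 'I_N) : R :=
  \big[Num.max/Q s a0]_(a : A) Q s a.

Definition bellman_opt (a0 : A) (g : R) (r : 'I_N -> A -> R)
    (P : 'I_N -> A -> 'I_N -> R) (Q : 'I_N -> A -> R) : Prop :=
  forall s a, Q s a = r s a + g * \sum_(s' < N) P s a s' * vmax a0 Q s'.

Definition greedy (Q : 'I_N -> A -> R) (s : 'I_N) (a : A) : Prop :=
  forall a' : A, Q s a' <= Q s a.

Definition Ctot (c : 'I_N -> A -> 'I_N -> nat) (n : 'I_N) (k : A) : R :=
  \sum_(i < N) (c n k i)%:R.

Definition T_mle (c : 'I_N -> A -> 'I_N -> nat) (n : 'I_N) (k : A) (i : 'I_N) : R :=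
  (c n k i)%:R / Ctot c n k.

Definition alpha (g gp : R) (q : 'I_N -> R) (c : 'I_N -> A -> 'I_N -> nat)
    (n : 'I_N) (k : A) (i : 'I_N) : R :=
  (g - gp) / gp * Ctot c n k * q i.

Definition T_post (g gp : R) (q : 'I_N -> R) (c : 'I_N -> A -> 'I_N -> nat)
    (n : 'I_N) (k : A) (i : 'I_N) : R :=
  ((c n k i)%:R + alpha g gp q c n k i) /
  (Ctot c n k + \sum_(j < N) alpha g gp q c n k j).

End MDP.

From HB Require Import structures.
From mathcomp Require Import all_boot all_order all_algebra.
From mathcomp Require Import reals.
From mathcomp Require Import ring lra.
Import Order.TTheory GRing.Theory Num.Theory.
Local Open Scope ring_scope.

(* Proof idea.
   (i) is a direct computation: since sum_j q_j = 1, the prior mass is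
   sum_j alpha_{n,k,j} = (g - gp)/gp * C_{n,k}, so the posterior mean is an
   affine mixture of the MLE and q with weight eps = (g - gp)/g.
   (ii) rests on one general fact about mixed kernels: if Q solves the
   Bellman equation with discount g for the kernel (1-e) P + e q, where q
   does not depend on (s,a) and P is stochastic, then Q - d solves the
   Bellman equation with discount g (1-e) for P, for an explicit constant
   d.  With eps as above g (1-eps) = gp.  The Bellman operator for a
   stochastic kernel and discount < 1 is a sup-norm contraction, so its
   fixed point is unique; hence Q*_MLE = Q*_post - d, and a constant shift
   does not change the greedy actions. *)

Section BigMax.
Context {R : realDomainType} {I : finType}.
Implicit Types (F : I -> R) (x M d : R).

Lemma bigmax_ge F x i : F i <= \big[Num.max/x]_(j : I) F j.
Proof. by rewrite (bigD1 i) //= le_max lexx. Qed.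

Lemma bigmax_seed F x : x <= \big[Num.max/x]_(j : I) F j.
Proof. by elim/big_rec: _ => // i y _ hy; rewrite le_max hy orbT. Qed.

Lemma bigmax_le F x M :
  x <= M -> (forall i, F i <= M) -> \big[Num.max/x]_(j : I) F j <= M.
Proof.
move=> hx hF; apply: (big_ind (fun u => u <= M)) => // u v hu hv.
by rewrite ge_max hu hv.
Qed.

Lemma bigmax_shift F x d :
  \big[Num.max/x + d]_(j : I) (F j + d) = \big[Num.max/x]_(j : I) F j + d.
Proof.
apply: (big_ind2 (fun u v => u = v + d)) => // u1 v1 u2 v2 -> ->.
case: (leP v1 v2) => h; first by rewrite !max_r // lerD2r.
by rewrite !max_l ?ltW // ltrD2r.
Qed.

End BigMax.

Section Bellman.
Context {R : realType} {N : nat} {A : finType} (a0 : A).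
Implicit Types (Q : 'I_N -> A -> R) (P : 'I_N -> A -> 'I_N -> R)
  (r : 'I_N -> A -> R) (q : 'I_N -> R) (g e d D : R).

Definition nonneg_kernel P := forall s a s', 0 <= P s a s'.
Definition row_stochastic P := forall s a, \sum_(s' < N) P s a s' = 1.

Lemma vmax_ge Q s a : Q s a <= vmax a0 Q s.
Proof. exact: bigmax_ge. Qed.

Lemma vmax_shift Q d s :
  vmax a0 (fun s a => Q s a + d) s = vmax a0 Q s + d.
Proof. exact: bigmax_shift. Qed.

Lemma vmax_dist {Q Q' D s} :
  (forall a, `|Q s a - Q' s a| <= D) -> `|vmax a0 Q s - vmax a0 Q' s| <= D.
Proof.
move=> hD.
have below Q1 Q2 : (forall a, `|Q1 s a - Q2 s a| <= D) ->
    vmax a0 Q2 s <= vmax a0 Q1 s + D.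
  move=> h; apply: bigmax_le => [|a]; [move: (h a0) | move: (h a)];
    [have := vmax_ge Q1 s a0 | have := vmax_ge Q1 s a];
    rewrite ler_norml => ? /andP[? ?]; lra.
have h1 := below _ _ hD.
have h2 : vmax a0 Q s <= vmax a0 Q' s + D by apply: below => a; rewrite distrC.
by rewrite ler_norml; apply/andP; split; lra.
Qed.

Lemma bellman_contract {g r P Q Q' D} :
  0 <= g -> nonneg_kernel P -> row_stochastic P ->
  bellman_opt a0 g r P Q -> bellman_opt a0 g r P Q' ->
  (forall s, `|vmax a0 Q s - vmax a0 Q' s| <= D) ->
  forall s a, `|Q s a - Q' s a| <= g * D.
Proof.
move=> g0 P0 P1 HQ HQ' HV s a.
rewrite HQ HQ' opprD addrACA subrr add0r -mulrBr -sumrB normrM ger0_norm //.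
apply: ler_wpM2l => //; apply: le_trans (ler_norm_sum _ _ _) _.
rewrite -[D]mul1r -(P1 s a) mulr_suml; apply: ler_sum => s' _.
by rewrite -mulrBr normrM ger0_norm // ler_wpM2l.
Qed.

(* The Bellman optimality equation with discount g < 1 has at most one
   solution: the largest gap D over all (s,a) satisfies D <= g D. *)
Lemma bellman_unique {g r P Q Q'} :
  0 <= g -> g < 1 -> nonneg_kernel P -> row_stochastic P ->
  bellman_opt a0 g r P Q -> bellman_opt a0 g r P Q' ->
  forall s a, Q s a = Q' s a.
Proof.
move=> g0 g1 P0 P1 HQ HQ'.
pose D := \big[Num.max/0]_(p : 'I_N * A) `|Q p.1 p.2 - Q' p.1 p.2|.
have D0 : 0 <= D by apply: bigmax_seed.
have HD s a : `|Q s a - Q' s a| <= D.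
  by have := bigmax_ge (fun p : 'I_N * A => `|Q p.1 p.2 - Q' p.1 p.2|) 0 (s, a).
have HgD := bellman_contract g0 P0 P1 HQ HQ' (fun s => vmax_dist (HD s)).
have DgD : D <= g * D by apply: bigmax_le => [|[s a]]; rewrite ?mulr_ge0.
move=> s a; apply/eqP; rewrite -subr_eq0 -normr_eq0 eq_le normr_ge0 andbT.
by have := HD s a; nra.
Qed.

Lemma bellman_mixture_shift {g e r P P' q Q} :
  row_stochastic P -> g * (1 - e) != 1 ->
  (forall s a s', P' s a s' = (1 - e) * P s a s' + e * q s') ->
  bellman_opt a0 g r P' Q ->
  let d := g * e * (\sum_(s' < N) q s' * vmax a0 Q s') / (1 - g * (1 - e)) in
  bellman_opt a0 (g * (1 - e)) r P (fun s a => Q s a - d).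
Proof.
move=> P1 gp1 HP' HQ d s a.
under eq_bigr => s' _ do rewrite (vmax_shift Q (- d) s') mulrBr.
rewrite sumrB -mulr_suml P1 mul1r HQ.
under eq_bigr => s' _ do rewrite HP' mulrDl -!mulrA.
rewrite big_split /= -!mulr_sumr.
have hd : d * (1 - g * (1 - e)) = g * e * \sum_(s' < N) q s' * vmax a0 Q s'.
  by rewrite /d divfK // subr_eq0 eq_sym.
set X := \sum_(s' < N) _; set Y := \sum_(s' < N) _ in hd *.
nra.
Qed.

Lemma greedy_shift {Q Q' d} :
  (forall s a, Q' s a = Q s a - d) -> forall s a, greedy Q s a <-> greedy Q' s a.
Proof.
rewrite /greedy => HQ' s a; split=> h a'; have := h a'; rewrite !HQ'; lra.
Qed.

End Bellman.

Section Dirichlet.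
Context {R : realType} {N : nat} {A : finType} {c : 'I_N -> A -> 'I_N -> nat}.
Context {g gp : R} {q : 'I_N -> R}.
Hypothesis Cpos : forall n k, (0 : R) < Ctot c n k.

Lemma T_mle_nonneg : nonneg_kernel (T_mle c : _ -> _ -> _ -> R).
Proof. by move=> s a s'; rewrite /T_mle divr_ge0 // ltW. Qed.

Lemma T_mle_stochastic : row_stochastic (T_mle c : _ -> _ -> _ -> R).
Proof.
by move=> s a; rewrite /T_mle -mulr_suml -/(Ctot c s a) divff // lt0r_neq0.
Qed.

(* Part (i): the posterior mean mixes the MLE with q, with weight
   eps = (g - gp)/g, because the total prior mass is (g - gp)/gp * C. *)
Lemma T_post_mixture :
  0 < gp -> 0 < g -> \sum_(i < N) q i = 1 ->
  forall n k i, T_post g gp q c n k i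
    = (1 - (g - gp) / g) * T_mle c n k i + (g - gp) / g * q i.
Proof.
move=> gp0 g0 q1 n k i; rewrite /T_post /T_mle /alpha -mulr_sumr q1 mulr1.
have := Cpos n k; set C := Ctot c n k => C0.
by field; apply/and4P; split; apply/lt0r_neq0 => //; nra.
Qed.

End Dirichlet.

Lemma mixed_discount {R : realFieldType} {g gp : R} :
  g != 0 -> g * (1 - (g - gp) / g) = gp.
Proof. by move=> g0; field. Qed.

Lemma alpha_uniform (R : realType) (N : nat) (A : finType)
    (c : 'I_N -> A -> 'I_N -> nat) (g gp : R) (q : 'I_N -> R) :
  (forall i, q i = N%:R^-1) ->
  forall n k i, alpha g gp q c n k i = (g - gp) / gp * (Ctot c n k / N%:R).
Proof. by move=> hq n k i; rewrite /alpha hq mulrA. Qed.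

Theorem mainTheorem2 (R : realType) (N : nat) (A : finType) (a0 : A)
    (r : 'I_N -> A -> R) (g gp : R)
    (c : 'I_N -> A -> 'I_N -> nat) (q : 'I_N -> R) :
  0 < gp -> gp < g -> g < 1 ->
  (forall n k, (0 : R) < Ctot c n k) ->
  (forall i, 0 < q i) -> \sum_(i < N) q i = 1 ->
  (* (i) posterior mean = (1-eps) MLE + eps q, eps = (g-gp)/g *)
  (forall n k i,
      T_post g gp q c n k i
      = (1 - (g - gp) / g) * T_mle c n k i + (g - gp) / g * q i)
  /\
  (* (ii) same optimal policies: greedy sets of Q* agree in every state *)
  (forall Q1 Q2 : 'I_N -> A -> R,
      bellman_opt a0 g r (T_post g gp q c) Q1 ->
      bellman_opt a0 gp r (T_mle c) Q2 ->
      forall s a, greedy Q1 s a <-> greedy Q2 s a)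
  /\
  (* uniform prior case *)
  ((forall i, q i = N%:R^-1) ->
   forall n k i, alpha g gp q c n k i = (g - gp) / gp * (Ctot c n k / N%:R)).
Proof.
move=> gp0 gpg g1 Cpos _ q1.
have g0 : g != 0 by apply/lt0r_neq0; lra.
have Hpost := T_post_mixture Cpos gp0 (lt_trans gp0 gpg) q1.
split=> //; split; last exact: alpha_uniform.
move=> Q1 Q2 H1 H2.
have disc : g * (1 - (g - gp) / g) = gp := mixed_discount g0.
have disc1 : g * (1 - (g - gp) / g) != 1 by rewrite disc lt_eqF // (lt_trans gpg).
have Hshift := bellman_mixture_shift a0 (T_mle_stochastic Cpos) disc1 Hpost H1.
rewrite /= disc in Hshift.
have E := bellman_unique a0 (ltW gp0) (lt_trans gpg g1)
  (T_mle_nonneg Cpos) (T_mle_stochastic Cpos) Hshift H2.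
exact: greedy_shift (fun s a => esym (E s a)).
Qed.
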